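(* A graph $G$ is a blow-up of a linear forest if and only if $G$ contains none of $A$, $B$, $E$ as an induced subgraph and every induced cycle of $G$ has length four.
   Context: All graphs are finite, simple and loopless. A linear forest is a disjoint union of paths. A blow-up of a graph $H$ is any graph obtained from $H$ by repeatedly adding false twins, i.e., adding a new vertex non-adjacent to some existing vertex $v$ and having exactly the same neighbourhood as $v$ (equivalently, replacing vertices of $H$ by non-empty independent sets, with complete or empty bipartite connections according to adjacency in $H$). The graphs $A$, $B$, $E$ have vertex set $\{v_0,\dots,v_5\}$ and edge sets: $E(A)=\{v_0v_1,v_1v_2,v_2v_3,v_3v_4,v_4v_5,v_1v_4\}$; $E(B)=E(A)\cup\{v_0v_5\}$; $E(E)=\{v_0v_1,v_1v_2,v_0v_5,v_1v_4,v_2v_3\}$. *)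

From mathcomp Require Import all_boot.
Set Implicit Arguments. Unset Strict Implicit. Unset Printing Implicit Defensive.

Definition simple_graph (T : finType) (e : rel T) : Prop :=
  symmetric e /\ irreflexive e.

(* Concretely, the vertices are in bijection (via p) with the pairs (i, j),
   i < k, j < n i, where component i is the path 0 - 1 - ... - (n i - 1). *)
Definition linear_forest (T' : finType) (eH : rel T') : Prop :=
  exists (k : nat) (n : nat -> nat) (p : T' -> nat * nat),
    injective p /\
    (forall v, (p v).1 < k /\ (p v).2 < n (p v).1) /\
    (forall i j, i < k -> j < n i -> exists v, p v = (i, j)) /\
    (forall u v, eH u v =
       ((p u).1 == (p v).1) && (((p u).2 == (p v).2.+1) || ((p v).2 == (p u).2.+1))).

(* G is a blow-up of H: every vertex x of H is replaced by the nonempty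
   independent set f^-1(x), with complete/empty connections according to H. *)
Definition blowup_of (T : finType) (e : rel T) (T' : finType) (eH : rel T') : Prop :=
  exists f : T -> T', (forall y, exists x, f x = y) /\
                     (forall u v, e u v = eH (f u) (f v)).

Definition blowup_of_linear_forest (T : finType) (e : rel T) : Prop :=
  exists (T' : finType) (eH : rel T'),
    simple_graph eH /\ linear_forest eH /\ blowup_of e eH.

Definition edges_rel (l : seq (nat * nat)) : rel 'I_6 :=
  fun i j => ((nat_of_ord i, nat_of_ord j) \in l) || ((nat_of_ord j, nat_of_ord i) \in l).

Definition A_edges : seq (nat * nat) := [:: (0,1); (1,2); (2,3); (3,4); (4,5); (1,4)].
Definition B_edges : seq (nat * nat) := (0,5) :: A_edges.
Definition E_edges : seq (nat * nat) := [:: (0,1); (1,2); (0,5); (1,4); (2,3)].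

Definition graphA : rel 'I_6 := edges_rel A_edges.
Definition graphB : rel 'I_6 := edges_rel B_edges.
Definition graphE : rel 'I_6 := edges_rel E_edges.

Definition induced_sub (T' : finType) (eH : rel T') (T : finType) (e : rel T) : Prop :=
  exists phi : T' -> T, injective phi /\ forall a b, e (phi a) (phi b) = eH a b.

Definition cyc_adj (k : nat) (i j : 'I_k) : bool :=
  (nat_of_ord j == (nat_of_ord i).+1 %% k) || (nat_of_ord i == (nat_of_ord j).+1 %% k).

Definition induced_cycle (T : finType) (e : rel T) (k : nat) : Prop :=
  3 <= k /\ induced_sub (@cyc_adj k) e.

Set Warnings "-notation-overridden".
From mathcomp Require Import all_boot zify.
Set Implicit Arguments. Unset Strict Implicit. Unset Printing Implicit Defensive.

(* In a blow-up of a linear forest, vertices with the same image are twins and every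
   vertex sees at most two images, so any three neighbours contain a pair of twins;
   the vertex v_1 of A, B and E has three pairwise non-twin neighbours, and in an
   induced cycle the two neighbours of a vertex of minimal position are twins, which
   forces length 4.
   Conversely, excluding A, B and the cycles C_k (k <> 4) makes some pair of opposite
   vertices of every induced C_4 twins, and excluding also E and C_5 makes any three
   neighbours of a vertex contain a pair of twins.  Hence the graph of twin classes has
   maximum degree two; a walk never returning to the previous twin class would close an
   induced cycle of pairwise non-twin vertices, so every component contains an end r,
   a vertex whose neighbours are pairwise twins.  The breadth-first levels from the class of r are
   then twin classes, adjacent exactly when consecutive: G is a blow-up of the disjoint
   union of these paths. *)

Section Twins.
Variables (T : finType) (e : rel T).

Definition twins u v := [forall w, e u w == e v w].

Lemma twinsP u v : reflect (forall w, e u w = e v w) (twins u v).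
Proof. by apply: (iffP forallP) => H w; apply/eqP. Qed.

Lemma twinsPn u v : reflect (exists w, e u w != e v w) (~~ twins u v).
Proof. exact: forallPn. Qed.

Lemma twins_refl u : twins u u.
Proof. exact/twinsP. Qed.

Lemma twins_sym u v : twins u v = twins v u.
Proof. by apply/twinsP/twinsP => H w; rewrite H. Qed.

Lemma twins_trans u v w : twins u v -> twins v w -> twins u w.
Proof. by move=> /twinsP H1 /twinsP H2; apply/twinsP => z; rewrite H1 H2. Qed.

Lemma twins_nadj u v : irreflexive e -> twins u v -> e u v = false.
Proof. by move=> eirr /twinsP ->; rewrite eirr. Qed.

End Twins.

Arguments twinsP {T e u v}.
Arguments twinsPn {T e u v}.

Lemma induced_twins (T T' : finType) (e : rel T) (eH : rel T') (phi : T' -> T) a b :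
  (forall i j, e (phi i) (phi j) = eH i j) ->
  twins e (phi a) (phi b) -> twins eH a b.
Proof. by move=> He /twinsP H; apply/twinsP => w; rewrite -!He H. Qed.

Definition lf_adj (x y : nat * nat) : bool :=
  (x.1 == y.1) && ((x.2 == y.2.+1) || (y.2 == x.2.+1)).

Lemma blowup_lf_adj (T : finType) (e : rel T) :
  blowup_of_linear_forest e -> exists g : T -> nat * nat, forall u v, e u v = lf_adj (g u) (g v).
Proof.
case=> T' [eH [_ [[k [n [p [_ [_ [_ eHp]]]]]] [f [_ ef]]]]].
by exists (p \o f) => u v; rewrite ef eHp.
Qed.

Lemma lf_adj_blowup (T : finType) (e : rel T) (g : T -> nat * nat) :
  (forall u v, e u v = lf_adj (g u) (g v)) ->
  (forall u j, j < (g u).2 -> exists v, g v = ((g u).1, j)) ->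
  blowup_of_linear_forest e.
Proof.
move=> eg down; pose T' := seq_sub (map g (enum T)).
pose f u : T' := SeqSub (map_f g (mem_enum T u)).
have gP (a : T') : exists u, ssval a = g u by case/mapP: (ssvalP a) => u _ ->; exists u.
pose n i := \max_(u | (g u).1 == i) (g u).2.+1.
exists T', (fun a b => lf_adj (ssval a) (ssval b)); split; [|split].
- split=> [a b|a]; first by rewrite /lf_adj eq_sym orbC.
  by apply/negbTE; case: (ssval a) => x1 x2; rewrite /lf_adj /=; lia.
- exists (\max_u (g u).1.+1), n, (fun a : T' => ssval a).
  split; [exact: val_inj|split; [|split]] => //.
  + move=> a; case: (gP a) => u ->; split; first exact: (leq_bigmax u).
    exact: (leq_bigmax_cond (P := fun w => (g w).1 == (g u).1) (F := fun w => (g w).2.+1)).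
  + move=> i j _ jn.
    have [/existsP [u /andP [/eqP ui ju]]|none] :=
      boolP [exists u, ((g u).1 == i) && (j <= (g u).2)].
      have [v gv] : exists v, g v = (i, j).
        have [->|ne] := eqVneq j (g u).2; first by exists u; rewrite -ui -surjective_pairing.
        by rewrite -ui; apply: down; lia.
      by exists (f v).
    suff : n i <= j by rewrite leqNgt jn.
    by apply/bigmax_leqP => u ui; move/existsPn: none => /(_ u); rewrite ui /= -ltnNge.
- exists f; split=> [a|//]; case: (gP a) => u au; exists u; exact: val_inj.
Qed.

Lemma lf_adj_three c a b d : lf_adj c a -> lf_adj c b -> lf_adj c d -> [\/ a = b, b = d | a = d].
Proof.
case: a b c d => [a1 a2] [b1 b2] [c1 c2] [d1 d2]; rewrite /lf_adj /= => H1 H2 H3.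
have [[-> ->]|[[-> ->]|[-> ->]]] :
  (a1 = b1 /\ a2 = b2) \/ (b1 = d1 /\ b2 = d2) \/ (a1 = d1 /\ a2 = d2) by lia.
all: by [constructor 1|constructor 2|constructor 3].
Qed.

Lemma lf_adj_above a b c : lf_adj a b -> lf_adj a c -> a.2 <= b.2 -> a.2 <= c.2 -> b = c.
Proof.
case: a b c => [a1 a2] [b1 b2] [c1 c2]; rewrite /lf_adj /= => H1 H2 H3 H4.
by have [-> ->] : b1 = c1 /\ b2 = c2 by lia.
Qed.

Lemma modnSml m d : (m %% d).+1 %% d = m.+1 %% d.
Proof. by rewrite -addn1 modnDml addn1. Qed.

Lemma cyc_adj_rot k (k0 : 0 < k) (a : 'I_k) s t :
  cyc_adj (Ordinal (ltn_pmod (a + s) k0)) (Ordinal (ltn_pmod (a + t) k0)) =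
  (t == s.+1 %[mod k]) || (s == t.+1 %[mod k]).
Proof. by rewrite /cyc_adj /= !modnSml -!addnS !eqn_modDl. Qed.

Lemma cyc_adj_sym k : symmetric (@cyc_adj k).
Proof. by move=> s t; rewrite /cyc_adj orbC. Qed.

Lemma cyc_adj_irr k (s : 'I_k) : 1 < k -> cyc_adj s s = false.
Proof.
move=> k1; have sk := ltn_ord s; rewrite /cyc_adj orbb; apply/negbTE.
have [sk'|ne] := eqVneq s.+1 k; first by rewrite sk' modnn; lia.
rewrite modn_small; lia.
Qed.

Lemma cyc_adj_lt k (s t : 'I_k) : s < t ->
  cyc_adj s t = (t == s.+1 :> nat) || (s == 0 :> nat) && (t == k.-1 :> nat).
Proof.
move=> st; have tk := ltn_ord t; rewrite /cyc_adj (modn_small (_ : s.+1 < k)); last by lia.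
have [tk'|ne] := eqVneq t.+1 k; first by rewrite tk' modnn; apply/idP/idP; lia.
rewrite modn_small; [apply/idP/idP|]; lia.
Qed.

Section LinearForestBlowup.
Variables (T : finType) (e : rel T) (g : T -> nat * nat).
Hypothesis eg : forall u v, e u v = lf_adj (g u) (g v).

Lemma lf_twins u v : g u = g v -> twins e u v.
Proof. by move=> E; apply/twinsP => w; rewrite !eg E. Qed.

Lemma lf_neighbour_twins c a b d : e c a -> e c b -> e c d ->
  [|| twins e a b, twins e b d | twins e a d].
Proof.
rewrite !eg => ca cb cd.
by case: (lf_adj_three ca cb cd) => /lf_twins ->; rewrite ?orbT.
Qed.

Lemma lf_no_induced_claw (T' : finType) (eH : rel T') c a b d :
  eH c a -> eH c b -> eH c d ->
  ~~ twins eH a b -> ~~ twins eH b d -> ~~ twins eH a d -> ~ induced_sub eH e.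
Proof.
move=> ca cb cd nab nbd nad [phi [_ ephi]].
have := @lf_neighbour_twins (phi c) (phi a) (phi b) (phi d).
rewrite !ephi => /(_ ca cb cd) /or3P[] /(induced_twins ephi); exact/negP.
Qed.

Lemma lf_induced_cycle k : induced_cycle e k -> k = 4.
Proof.
(* The neighbours x 1 and x k.-1 of a vertex a of minimal position are twins, so
   x 2, adjacent to the first, is adjacent to the second, which forces k = 4. *)
case=> k3 [phi [_ ephi]].
have k0 : 0 < k by lia.
case: (@arg_minnP _ (Ordinal k0) xpredT (fun i => (g (phi i)).2) isT) => a _ amin.
pose x t : 'I_k := Ordinal (ltn_pmod (a + t) k0).
have xa : x 0 = a by apply: val_inj; rewrite /= addn0 modn_small.
have exx s t : e (phi (x s)) (phi (x t)) = (t == s.+1 %[mod k]) || (s == t.+1 %[mod k]).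
  by rewrite ephi cyc_adj_rot.
have ab : e (phi a) (phi (x 1)) by rewrite -{1}xa exx eqxx.
have ac : e (phi a) (phi (x k.-1)) by rewrite -{1}xa exx prednK // modnn mod0n eqxx orbT.
have /lf_twins/twinsP bc : g (phi (x 1)) = g (phi (x k.-1)).
  by move: ab ac; rewrite !eg => ab ac; apply: (lf_adj_above ab ac); apply: amin.
have := bc (phi (x 2)); rewrite !exx eqxx prednK // modnn /= => /esym.
have [-> //|k_neq3] := eqVneq k 3.
rewrite !modn_small; lia.
Qed.
End LinearForestBlowup.

Local Notation o6 k := (@Ordinal 6 k isT).

Lemma blowup_lf_forbidden (T : finType) (e : rel T) :
  blowup_of_linear_forest e ->
  [/\ ~ induced_sub graphA e, ~ induced_sub graphB e, ~ induced_sub graphE e &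
      forall k : nat, induced_cycle e k -> k = 4].
Proof.
case/blowup_lf_adj => g eg.
have claw (eH : rel 'I_6) x y z : eH (o6 1) (o6 0) -> eH (o6 1) (o6 2) -> eH (o6 1) (o6 4) ->
    eH (o6 0) x != eH (o6 2) x -> eH (o6 2) y != eH (o6 4) y -> eH (o6 0) z != eH (o6 4) z ->
    ~ induced_sub eH e.
  move=> ca cb cd nab nbd nad; apply: (lf_no_induced_claw eg ca cb cd); apply/twinsPn.
  - by exists x.
  - by exists y.
  - by exists z.
split; last exact: lf_induced_cycle eg.
- exact: (claw _ (o6 3) (o6 5) (o6 3)).
- exact: (claw _ (o6 3) (o6 5) (o6 3)).
- exact: (claw _ (o6 5) (o6 3) (o6 5)).
Qed.

(* Checked on [nat] rather than ['I_n] so that it evaluates: enumerating ordinals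
   goes through the opaque [idP]. *)
Definition twin_freeb n (h : rel nat) : bool :=
  all (fun i => all (fun j => (i == j) || has (fun w => h i w != h j w) (iota 0 n))
                    (iota 0 n)) (iota 0 n).

Lemma twin_freeb_twins n (h : rel nat) (eH : rel 'I_n) i j :
  twin_freeb n h -> (forall a b, eH a b = h a b) -> twins eH i j -> i = j.
Proof.
have mem (k : 'I_n) : val k \in iota 0 n by rewrite mem_iota ltn_ord.
move=> /allP /(_ i (mem i)) /allP /(_ j (mem j)) + eHh /twinsP E.
case/orP=> [/eqP/val_inj //|/hasP [w]]; rewrite mem_iota /= => wn.
by have := E (Ordinal wn); rewrite !eHh => ->; rewrite eqxx.
Qed.

Lemma induced_sub_twin_free (T : finType) (e : rel T) n (h : rel nat) (eH : rel 'I_n)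
    (phi : 'I_n -> T) :
  twin_freeb n h -> (forall a b, eH a b = h a b) ->
  (forall a b, e (phi a) (phi b) = eH a b) -> induced_sub eH e.
Proof.
move=> tf eHh ephi; exists phi; split=> // i j E.
by apply: (twin_freeb_twins tf eHh); apply: (induced_twins ephi); rewrite E twins_refl.
Qed.

Lemma induced_sub_edges (T : finType) (e : rel T) l (phi : 'I_6 -> T) :
  twin_freeb 6 (fun a b => ((a, b) \in l) || ((b, a) \in l)) ->
  (forall a b, e (phi a) (phi b) = edges_rel l a b) -> induced_sub (edges_rel l) e.
Proof. by move=> tf; apply: induced_sub_twin_free tf _. Qed.

Lemma induced_cycle_twin_free (T : finType) (e : rel T) k (phi : 'I_k -> T) :
  3 <= k -> twin_freeb k (fun a b => (b == a.+1 %% k) || (a == b.+1 %% k)) ->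
  (forall a b, e (phi a) (phi b) = cyc_adj a b) -> induced_cycle e k.
Proof. by move=> k3 tf ephi; split=> //; apply: induced_sub_twin_free tf _ ephi. Qed.

Section InducedPatterns.
Variables (T : finType) (e : rel T).
Hypotheses (esym : symmetric e) (eirr : irreflexive e).

Local Ltac edge_tac :=
  solve [ by rewrite eirr | done | by rewrite esym | by apply/negbTE
        | by rewrite esym; apply/negbTE ].

Lemma induced_A x0 x1 x2 x3 x4 x5 :
  e x0 x1 -> e x1 x2 -> e x2 x3 -> e x3 x4 -> e x4 x5 -> e x1 x4 ->
  ~~ e x0 x2 -> ~~ e x0 x3 -> ~~ e x0 x4 -> ~~ e x0 x5 -> ~~ e x1 x3 -> ~~ e x1 x5 ->
  ~~ e x2 x4 -> ~~ e x2 x5 -> ~~ e x3 x5 -> induced_sub graphA e.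
Proof.
move=> *; apply: (@induced_sub_edges _ _ _ (nth x0 [:: x0; x1; x2; x3; x4; x5])) => //.
by move=> [[|[|[|[|[|[|i]]]]]] ?] [[|[|[|[|[|[|j]]]]]] ?] //=; edge_tac.
Qed.

Lemma induced_B x0 x1 x2 x3 x4 x5 :
  e x0 x1 -> e x1 x2 -> e x2 x3 -> e x3 x4 -> e x4 x5 -> e x1 x4 -> e x0 x5 ->
  ~~ e x0 x2 -> ~~ e x0 x3 -> ~~ e x0 x4 -> ~~ e x1 x3 -> ~~ e x1 x5 ->
  ~~ e x2 x4 -> ~~ e x2 x5 -> ~~ e x3 x5 -> induced_sub graphB e.
Proof.
move=> *; apply: (@induced_sub_edges _ _ _ (nth x0 [:: x0; x1; x2; x3; x4; x5])) => //.
by move=> [[|[|[|[|[|[|i]]]]]] ?] [[|[|[|[|[|[|j]]]]]] ?] //=; edge_tac.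
Qed.

Lemma induced_E x0 x1 x2 x3 x4 x5 :
  e x0 x1 -> e x1 x2 -> e x0 x5 -> e x1 x4 -> e x2 x3 ->
  ~~ e x0 x2 -> ~~ e x0 x3 -> ~~ e x0 x4 -> ~~ e x1 x3 -> ~~ e x1 x5 ->
  ~~ e x2 x4 -> ~~ e x2 x5 -> ~~ e x3 x4 -> ~~ e x3 x5 -> ~~ e x4 x5 -> induced_sub graphE e.
Proof.
move=> *; apply: (@induced_sub_edges _ _ _ (nth x0 [:: x0; x1; x2; x3; x4; x5])) => //.
by move=> [[|[|[|[|[|[|i]]]]]] ?] [[|[|[|[|[|[|j]]]]]] ?] //=; edge_tac.
Qed.

Lemma induced_C3 x0 x1 x2 : e x0 x1 -> e x1 x2 -> e x0 x2 -> induced_cycle e 3.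
Proof.
move=> *; apply: (@induced_cycle_twin_free _ _ 3 (nth x0 [:: x0; x1; x2])) => //.
by move=> [[|[|[|i]]] ?] [[|[|[|j]]] ?] //=; edge_tac.
Qed.

Lemma induced_C5 x0 x1 x2 x3 x4 :
  e x0 x1 -> e x1 x2 -> e x2 x3 -> e x3 x4 -> e x0 x4 ->
  ~~ e x0 x2 -> ~~ e x0 x3 -> ~~ e x1 x3 -> ~~ e x1 x4 -> ~~ e x2 x4 -> induced_cycle e 5.
Proof.
move=> *; apply: (@induced_cycle_twin_free _ _ 5 (nth x0 [:: x0; x1; x2; x3; x4])) => //.
by move=> [[|[|[|[|[|i]]]]] ?] [[|[|[|[|[|j]]]]] ?] //=; edge_tac.
Qed.

Lemma induced_cycle_of_lt k (phi : 'I_k -> T) : 3 <= k -> injective phi ->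
  (forall s t : 'I_k, s < t -> e (phi s) (phi t) = cyc_adj s t) -> induced_cycle e k.
Proof.
move=> k3 phi_inj ephi; split=> //; exists phi; split=> // s t.
case: (ltngtP s t) => [st|ts|/val_inj ->]; first exact: ephi.
- by rewrite esym cyc_adj_sym ephi.
- by rewrite eirr cyc_adj_irr //; lia.
Qed.

End InducedPatterns.

Section ForbiddenFree.
Variables (T : finType) (e : rel T).
Hypotheses (esym : symmetric e) (eirr : irreflexive e).
Hypotheses (noA : ~ induced_sub graphA e) (noB : ~ induced_sub graphB e).
Hypothesis noE : ~ induced_sub graphE e.
Hypothesis cyc4 : forall k, induced_cycle e k -> k = 4.

Local Notation twins := (twins e).

Lemma no_triangle a b c : e a b -> e a c -> ~~ e b c.
Proof. by move=> ab ac; apply/negP => bc; have := cyc4 (induced_C3 esym eirr ab bc ac). Qed.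

Lemma C4_no_pendants a b c d x y :
  e a b -> e b c -> e c d -> e d a -> ~~ e a c -> ~~ e b d ->
  e a x -> ~~ e c x -> e b y -> ~~ e d y -> False.
Proof.
move=> ab bc cd da nac nbd ax ncx b_y ndy.
have nbx : ~~ e b x by apply: no_triangle ab ax.
have ndx : ~~ e d x by apply: (no_triangle _ ax); rewrite esym.
have nay : ~~ e a y by apply: (no_triangle _ b_y); rewrite esym.
have ncy : ~~ e c y by apply: no_triangle bc b_y.
have [xy|nxy] := boolP (e x y).
- by apply: noB; apply: (induced_B esym eirr (x0 := x) (x1 := a) (x2 := d) (x3 := c)
    (x4 := b) (x5 := y)) => //; rewrite esym.
- by apply: noA; apply: (induced_A esym eirr (x0 := x) (x1 := a) (x2 := d) (x3 := c)
    (x4 := b) (x5 := y)) => //; rewrite esym.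
Qed.

Lemma C4_pendant_twins a b c d x :
  e a b -> e b c -> e c d -> e d a -> ~~ e a c -> ~~ e b d ->
  e a x -> ~~ e c x -> twins b d.
Proof.
move=> ab bc cd da nac nbd ax ncx; apply: contraT => /twinsPn [y].
case b_y: (e b y); case dy: (e d y) => // _; exfalso.
- exact: (C4_no_pendants ab bc cd da nac nbd ax ncx b_y (negbT dy)).
- apply: (C4_no_pendants (b := d) (d := b) (y := y) _ _ _ _ nac _ ax ncx) => //;
    by rewrite ?b_y // esym.
Qed.

Lemma C4_twins a b c d :
  e a b -> e b c -> e c d -> e d a -> ~~ e a c -> ~~ e b d -> twins a c || twins b d.
Proof.
move=> ab bc cd da nac nbd; have [//|/twinsPn [x]] := boolP (twins a c).
case ax: (e a x); case cx: (e c x) => // _ /=.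
- exact: (C4_pendant_twins ab bc cd da nac nbd ax (negbT cx)).
- by apply: (C4_pendant_twins (a := c) (c := a) (x := x)) => //; rewrite ?ax // esym.
Qed.

Definition private_nbr v a b c x := [&& e a x, ~~ e b x, ~~ e c x & ~~ e v x].

Lemma private_nbrC v a b c x : private_nbr v a b c x = private_nbr v a c b x.
Proof. by rewrite /private_nbr; case: (e b x); case: (e c x). Qed.

Lemma private_nbr_of_distinguishing v a b c x : e v a -> e v b -> e v c -> ~~ twins a c ->
  e a x -> ~~ e b x -> private_nbr v a b c x.
Proof.
move=> va vb vc nac ax nbx.
have nvx : ~~ e v x by apply: (no_triangle _ ax); rewrite esym.
rewrite /private_nbr ax nbx nvx andbT /=; apply/negP => cx.
have xc : e x c by rewrite esym.
have cv : e c v by rewrite esym.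
have := C4_twins va ax xc cv nvx (no_triangle va vc).
rewrite (negbTE nac) orbF => /twinsP vx.
by move: nbx; rewrite esym -vx vb.
Qed.

Lemma no_two_private_nbrs v a b c x y : e v a -> e v b -> e v c ->
  private_nbr v a b c x -> private_nbr v b a c y -> False.
Proof.
move=> va vb vc /and4P [ax nbx ncx nvx] /and4P [b_y nay ncy nvy].
have nab := no_triangle va vb; have nac := no_triangle va vc; have nbc := no_triangle vb vc.
have [xy|nxy] := boolP (e x y).
- have yb : e y b by rewrite esym.
  have nxb : ~~ e x b by rewrite esym.
  by have := cyc4 (induced_C5 esym eirr va ax xy yb vb nvx nvy nay nab nxb).
- by apply: noE; apply: (induced_E esym eirr (x0 := a) (x1 := v) (x2 := b) (x3 := y)
    (x4 := c) (x5 := x)) => //; rewrite esym.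
Qed.

Lemma exists_private_nbr v a b c : e v a -> e v b -> e v c ->
  ~~ twins a b -> ~~ twins a c -> ~~ twins b c ->
  exists x, private_nbr v a b c x || private_nbr v b a c x.
Proof.
move=> va vb vc /twinsPn [x]; case ax: (e a x); case bx: (e b x) => // _ nac nbc;
  exists x; apply/orP.
- by left; apply: private_nbr_of_distinguishing; rewrite ?bx.
- by right; apply: private_nbr_of_distinguishing; rewrite ?ax.
Qed.

Lemma neighbour_twins v a b c : e v a -> e v b -> e v c -> [|| twins a b, twins b c | twins a c].
Proof.
move=> va vb vc; apply: contraT => /norP [nab /norP [nbc nac]]; exfalso.
have nba : ~~ twins b a by rewrite twins_sym.
have ncb : ~~ twins c b by rewrite twins_sym.
have nca : ~~ twins c a by rewrite twins_sym.
case: (exists_private_nbr va vb vc nab nac nbc) => x /orP [xa|xb].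
- case: (exists_private_nbr vb vc va nbc nba nca) => y /orP [yb|yc].
  + by apply: (no_two_private_nbrs va vb vc xa (y := y)); rewrite private_nbrC.
  + by apply: (no_two_private_nbrs va vc vb (x := x) (y := y)); rewrite private_nbrC.
- case: (exists_private_nbr va vc vb nac nab ncb) => y /orP [ya|yc].
  + by apply: (no_two_private_nbrs vb va vc xb (y := y)); rewrite private_nbrC.
  + by apply: (no_two_private_nbrs vb vc va (x := x) (y := y)); rewrite private_nbrC.
Qed.

Definition is_end r := [forall a, forall b, e r a ==> e r b ==> twins a b].

Lemma is_endP r : reflect (forall a b, e r a -> e r b -> twins a b) (is_end r).
Proof.
apply: (iffP forallP) => [H a b ra rb | H a].
  by move/forallP: (H a) => /(_ b); rewrite ra rb.
by apply/forallP => b; apply/implyP => ra; apply/implyP; apply: H.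
Qed.

Lemma is_endPn r : ~~ is_end r -> exists a b, [/\ e r a, e r b & ~~ twins a b].
Proof.
case/forallPn => a /forallPn [b]; rewrite !negb_imply => /and3P [ra rb nab].
by exists a, b.
Qed.

(* Away from ends one can always move to a neighbour that is not a twin of the
   previous vertex; the first twin repetition along such a walk closes an induced
   cycle through pairwise non-twin vertices. *)
Definition walk_step p c := odflt c [pick y | e c y && ~~ twins p y].

Lemma walk_stepP p c : ~~ is_end c -> e c (walk_step p c) && ~~ twins p (walk_step p c).
Proof.
case/is_endPn => a [b [ca cb nab]]; rewrite /walk_step.
case: pickP => [y //|/= none].
move: (none a) (none b); rewrite ca cb /= => /negbFE pa /negbFE pb.
by move: nab; rewrite (twins_trans _ pb) // twins_sym.
Qed.

Section Walk.
Variables (u p0 : T).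
Hypothesis up0 : e u p0.
Hypothesis no_end : forall r, connect e u r -> ~~ is_end r.

Definition walk n := (iter n (fun pc => (pc.2, walk_step pc.1 pc.2)) (p0, u)).1.

Lemma walkSS n : walk n.+2 = walk_step (walk n) (walk n.+1).
Proof. by []. Qed.

Lemma walk_connect_adj n : connect e u (walk n.+1) /\ e (walk n) (walk n.+1).
Proof.
elim: n => [|n [un nn1]]; first by rewrite connect0 esym.
have /andP [n1n2 _] := walk_stepP (walk n) (no_end un); rewrite -walkSS in n1n2.
by split=> //; apply: connect_trans un (connect1 n1n2).
Qed.

Lemma walk_adj n : e (walk n) (walk n.+1).
Proof. by case: (walk_connect_adj n). Qed.

Lemma walk_not_twins n : ~~ twins (walk n) (walk n.+2).
Proof. by case/andP: (walk_stepP (walk n) (no_end (proj1 (walk_connect_adj n)))). Qed.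

End Walk.

Section ClosedWalk.
Variables (w : nat -> T) (I J : nat).
Hypotheses (IJ : I < J) (twIJ : twins (w I) (w J)).
Hypothesis distinct : forall x y, x < y -> y < J -> ~~ twins (w x) (w y).
Hypotheses (wadj : forall n, e (w n) (w n.+1)) (wnt : forall n, ~~ twins (w n) (w n.+2)).

Lemma closed_walk_adj x y : I <= x -> x < y -> y < J ->
  e (w x) (w y) = (y == x.+1) || (x == I) && (y == J.-1).
Proof.
move=> Ix xy yJ.
have [->|ny] := eqVneq y x.+1; first by rewrite wadj.
have [/andP [/eqP -> /eqP ->]|nc] /= := boolP ((x == I) && (y == J.-1)).
  by have := wadj J.-1; rewrite prednK; [rewrite (twinsP twIJ) esym | lia].
apply/negbTE/negP => xy_adj.
have yy1 : y.-1.+1 = y by lia.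
have y_y1 : e (w y) (w y.-1) by rewrite esym -{2}yy1 wadj.
have y_x : e (w y) (w x) by rewrite esym.
case/or3P: (neighbour_twins y_y1 (wadj y) y_x) => [tw | tw | tw].
- by have := wnt y.-1; rewrite yy1 tw.
- have [y1J|Jy1] := ltnP y.+1 J.
    have xy1 : x < y.+1 by lia.
    by move: (distinct xy1 y1J); rewrite twins_sym tw.
  have {Jy1} yJ' : y.+1 = J by lia.
  have tIx : twins (w I) (w x) by apply: (twins_trans twIJ); rewrite -yJ'.
  have [xI|Ix'] := eqVneq x I; first by move: nc; rewrite xI -yJ' /= !eqxx.
  have Ix2 : I < x by lia.
  by move: (distinct Ix2 (ltn_trans xy yJ)); rewrite tIx.
- have xy1 : x < y.-1 by lia.
  have y1J : y.-1 < J by lia.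
  by move: (distinct xy1 y1J); rewrite twins_sym tw.
Qed.

Lemma closed_walk_length : 3 <= J - I.
Proof.
have J1 : J != I.+1 by apply/eqP => JI; move: (wadj I); rewrite -JI (twins_nadj eirr twIJ).
have J2 : J != I.+2 by apply/eqP => JI; move: (wnt I); rewrite -JI twIJ.
lia.
Qed.

Lemma closed_walk_cycle : induced_cycle e (J - I).
Proof.
have lt_shift (s t : 'I_(J - I)) : s < t -> I + s < I + t < J.
  by have := ltn_ord t; lia.
apply: (induced_cycle_of_lt esym eirr (phi := fun t : 'I_(J - I) => w (I + t)))
  closed_walk_length _ _ => [s t E|s t st].
- have neq (a b : 'I_(J - I)) : a < b -> w (I + a) != w (I + b).
    move=> /lt_shift /andP [ab bJ].
    by apply: contraNneq (distinct ab bJ) => ->; apply: twins_refl.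
  by case: (ltngtP s t) => [/neq|/neq|/val_inj //]; rewrite E eqxx.
- have /andP [st' tJ] := lt_shift _ _ st.
  rewrite closed_walk_adj ?leq_addr // cyc_adj_lt //; apply/idP/idP; lia.
Qed.

Lemma closed_walk_absurd : False.
Proof.
have J4 := cyc4 closed_walk_cycle.
have e30 : e (w I.+3) (w I) by rewrite esym closed_walk_adj //; lia.
have n02 : ~~ e (w I) (w I.+2) by rewrite closed_walk_adj //; lia.
have n13 : ~~ e (w I.+1) (w I.+3) by rewrite closed_walk_adj //; lia.
case/orP: (C4_twins (wadj I) (wadj I.+1) (wadj I.+2) e30 n02 n13).
- by apply/negP; apply: distinct; lia.
- by apply/negP; apply: distinct; lia.
Qed.

End ClosedWalk.

Lemma connect_end u : exists r, is_end r && connect e u r.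
Proof.
apply/existsP; apply: contraT => /existsPn none; exfalso.
have no_end r : connect e u r -> ~~ is_end r by move=> ur; move: (none r); rewrite ur andbT.
have [p0 [_ [up0 _ _]]] := is_endPn (no_end u (connect0 e u)).
pose W := walk u p0.
have /injectivePn [i [j ij Wij]] : ~~ injectiveb (fun i : 'I_#|T|.+1 => W i).
  by apply/injectiveP => /leq_card; rewrite card_ord ltnn.
pose P n := [exists i : 'I_n, twins (W i) (W n)].
have exP : exists n, P n.
  case: (ltngtP i j) ij => [lt|lt|/val_inj -> /eqP //] _.
  - by exists j; apply/existsP; exists (Ordinal lt); rewrite /= Wij twins_refl.
  - by exists i; apply/existsP; exists (Ordinal lt); rewrite /= Wij twins_refl.
case: (ex_minnP exP) => J /existsP [I twIJ] minJ.
apply: (closed_walk_absurd (ltn_ord I) twIJ) => [x y xy yJ||].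
- apply/negP => tw; have : P y by apply/existsP; exists (Ordinal xy).
  by move/minJ; rewrite leqNgt yJ.
- exact: walk_adj.
- exact: walk_not_twins.
Qed.

Section Levels.
Variable r : T.

(* [level x] is one plus the distance from x to the twin class of r (0 if x is not
   connected to r). *)
Definition level_step (S : {set T}) : {set T} :=
  [set x | twins x r] :|: [set y | [exists x in S, e x y]].

Lemma level_step_mono : {homo level_step : X Y / X \subset Y}.
Proof.
move=> X Y XY; apply/subsetP => y; rewrite !inE => /orP [->//|/existsP [x /andP [xX xy]]].
by apply/orP; right; apply/existsP; exists x; rewrite (subsetP XY).
Qed.

Definition level x := fix_order level_step x.

Lemma in_levelE k x : (x \in iter k level_step set0) = (0 < level x <= k).
Proof. exact: (in_iter_fixE level_step_mono x k). Qed.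

Lemma in_level_step S x : (x \in level_step S) = twins x r || [exists y in S, e y x].
Proof. by rewrite !inE. Qed.

Lemma level_eq1 x : (level x == 1) = twins x r.
Proof.
have := in_levelE 1 x; rewrite iterS in_level_step.
have -> : [exists y in set0, e y x] = false by apply/existsP => -[y]; rewrite inE.
by rewrite orbF => ->; case: (level x) => [|[|]].
Qed.

Lemma level_adj x y : 0 < level x -> e x y -> 0 < level y <= (level x).+1.
Proof.
move=> x0 xy; rewrite -in_levelE iterS in_level_step; apply/orP; right.
by apply/existsP; exists x; rewrite xy in_levelE x0 leqnn.
Qed.

Lemma level_pred x k : level x = k.+2 -> exists2 y, level y = k.+1 & e y x.
Proof.
move=> xk; have := in_levelE k.+2 x; rewrite xk leqnn iterS in_level_step.
case/orP => [|/existsP [y /andP [yk yx]]]; first by rewrite -level_eq1 xk.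
exists y => //; move: yk; rewrite in_levelE => /andP [y0 yk].
by have := level_adj y0 yx; rewrite xk; lia.
Qed.

Lemma connect_level x : connect e r x -> 0 < level x.
Proof.
have r1 : 0 < level r by have /eqP -> := etrans (level_eq1 r) (twins_refl e r).
case/connectP => p + ->; elim: p r r1 => [//|y p IH] z z0 /= /andP [zy py].
by apply: IH py; case/andP: (level_adj z0 zy).
Qed.

Lemma twins_level_le x y : 0 < level x -> twins x y -> 0 < level y <= level x.
Proof.
move=> x0 xy; case Ex: (level x) x0 => [//|[|k]] _.
  have xr : twins x r by rewrite -level_eq1 Ex.
  have yr : twins y r by apply: twins_trans xr; rewrite twins_sym.
  by move: yr; rewrite -level_eq1 => /eqP ->.
case: (level_pred Ex) => z zk zx.
have zy : e z y by rewrite esym -(twinsP xy) esym.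
have z0 : 0 < level z by rewrite zk.
by have := level_adj z0 zy; rewrite zk.
Qed.

Lemma twins_level x y : 0 < level x -> twins x y -> level y = level x.
Proof.
move=> x0 xy; have /andP [y0 yx] := twins_level_le x0 xy.
have yx' : twins y x by rewrite twins_sym.
have /andP [_ xy'] := twins_level_le y0 yx'.
by apply/eqP; rewrite eqn_leq yx xy'.
Qed.

Hypothesis r_end : is_end r.

Lemma level_twins k x y : level x = k.+1 -> level y = k.+1 -> twins x y.
Proof.
elim: k x y => [|k IH] x y xk yk.
  have xr : twins x r by rewrite -level_eq1 xk.
  by apply: twins_trans xr _; rewrite twins_sym -level_eq1 yk.
case: (level_pred xk) => a ak ax; case: (level_pred yk) => b bk b_y.
have ay : e a y by rewrite (twinsP (IH _ _ ak bk)).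
case: k IH xk yk ak bk => [|k] IH xk yk ak bk.
  have ra : twins r a by rewrite twins_sym -level_eq1 ak.
  by move/is_endP: r_end; apply; rewrite (twinsP ra).
case: (level_pred ak) => z zk za.
have az : e a z by rewrite esym.
case/or3P: (neighbour_twins az ax ay) => // /twins_level.
- by rewrite zk xk => /(_ isT) /eqP; lia.
- by rewrite zk yk => /(_ isT) /eqP; lia.
Qed.

Lemma level_adjE x y : 0 < level x -> 0 < level y ->
  e x y = (level y == (level x).+1) || (level x == (level y).+1).
Proof.
move=> x0 y0; apply/idP/idP => [xy|].
  have yx : e y x by rewrite esym.
  have := level_adj x0 xy; have := level_adj y0 yx.
  have [xy_eq|] := eqVneq (level x) (level y); last by lia.
  move=> _ _; have [k yk] : exists k, level y = k.+1 by exists (level y).-1; lia.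
  by rewrite (twins_nadj eirr (level_twins (etrans xy_eq yk) yk)) in xy.
wlog /eqP yx : x y x0 y0 / level y == (level x).+1.
  by move=> W /orP [] H; [apply: W | rewrite esym; apply: W]; rewrite ?H ?orbT.
move=> _; case Ex: (level x) x0 yx => [//|k] _ yk.
case: (level_pred yk) => z zk zy.
by rewrite (twinsP (level_twins Ex zk)).
Qed.

Lemma level_connect x j d : 0 < j -> level x = j + d -> exists2 z, connect e x z & level z = j.
Proof.
elim: d x => [|d IH] x j0 xd; first by exists x; rewrite ?connect0 ?xd ?addn0.
have /level_pred [y yd yx] : level x = (j.-1 + d).+2 by rewrite xd; lia.
have [z yz zj] : exists2 z, connect e y z & level z = j by apply: IH; rewrite ?yd; lia.
have xy : e x y by rewrite esym.
by exists z => //; apply: connect_trans (connect1 xy) yz.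
Qed.

End Levels.

Definition root u := odflt u [pick r | is_end r && connect e u r].

Lemma root_spec u : is_end (root u) && connect e u (root u).
Proof.
rewrite /root; case: pickP => [r //|none].
by case: (connect_end u) => r ur; move: (none r); rewrite ur.
Qed.

Lemma root_connect u v : connect e u v -> root u = root v.
Proof.
move=> uv; have same_ends : [pick r | is_end r && connect e u r] =
                            [pick r | is_end r && connect e v r].
  apply: eq_pick => r /=; congr andb; apply/idP/idP => [ur|]; last exact: connect_trans.
  by apply: connect_trans ur; rewrite (sym_connect_sym esym).
rewrite /root same_ends; case: pickP => // none.
by case: (connect_end v) => r vr; move: (none r); rewrite vr.
Qed.

Lemma root_level u : 0 < level (root u) u.
Proof. by apply: connect_level; rewrite (sym_connect_sym esym); case/andP: (root_spec u). Qed.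

Definition lf_coord u : nat * nat := (enum_rank (root u) : nat, (level (root u) u).-1).

Lemma lf_coord_adj u v : e u v = lf_adj (lf_coord u) (lf_coord v).
Proof.
rewrite /lf_adj /=; have [ruv|ne] := eqVneq (root u) (root v).
  case/andP: (root_spec u) => u_end _.
  have u0 := root_level u; have v0 := root_level v; rewrite -ruv in v0.
  rewrite (level_adjE u_end u0 v0) ruv eqxx /=; rewrite ruv in u0 v0.
  by apply/idP/idP; lia.
have -> : e u v = false by apply: contraNF ne => /connect1 /root_connect ->.
by rewrite (inj_eq val_inj) (inj_eq enum_rank_inj) (negbTE ne).
Qed.

Lemma lf_coord_down u j : j < (lf_coord u).2 -> exists v, lf_coord v = ((lf_coord u).1, j).
Proof.
move=> ju; case/andP: (root_spec u) => u_end _.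
have lu : level (root u) u = j.+1 + ((lf_coord u).2 - j).
  by move: ju; rewrite /=; have := root_level u; lia.
have [v uv vj] := level_connect u_end (ltn0Sn j) lu.
by exists v; rewrite /lf_coord -(root_connect uv) vj.
Qed.

Lemma forbidden_free_blowup : blowup_of_linear_forest e.
Proof. exact: lf_adj_blowup lf_coord_adj lf_coord_down. Qed.

End ForbiddenFree.

Theorem corollary2p7 (T : finType) (e : rel T) (He : simple_graph e) :
  blowup_of_linear_forest e <->
  (~ induced_sub graphA e /\ ~ induced_sub graphB e /\ ~ induced_sub graphE e /\
   forall k : nat, induced_cycle e k -> k = 4).
Proof.
split=> [/blowup_lf_forbidden [noA noB noE cyc4] // | [noA [noB [noE cyc4]]]].
by case: He => esym eirr; apply: (forbidden_free_blowup esym eirr noA noB noE cyc4).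
Qed.
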